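(* Suppose the smallest directed sub-block of $D$ has $n$ nodes. Then for every $x\in\mathbb{N}$ with $x<n-2$, every state in $M_{C(x)}$ is on at most two nodes, $M_{C(x)}=M_{C(0)}$, and the order-$x$ cycle-partitioning closed model coincides with the pair-level ($x=0$) model.
   Context: $D=(V,A)$ is a directed graph on $V=\{1,\dots,N\}$ with rates $T_{ij}\ge0$, $T_{ij}>0$ iff $(j,i)\in A$, $T_{ii}=0$. A subsystem state is $\psi^A_W$ with $W\subseteq V$ nonempty, $A:W\to\{S,I,R\}$; $S_i,I_i$ are single-node states; for $n\notin W$, $\psi^A_WI_n$ is the state on $W\cup\{n\}$ extending $A$ with $n$ in state $I$; $h^X_k(\psi^A_W)$ changes the state of $k\in W$ to $X$. $\mathrm{IN}_a(X)$ is the set of nodes that can reach some member of $X$ by traversing at most $a$ arcs. $f_{C(x)}(X,Y,i)=1$ iff $\mathrm{IN}_a(X)\cap\mathrm{IN}_b(Y)=\emptyset$ in $D-i$ for all $a,b\in\mathbb{N}$ with $a+b=x$, else $0$, and by convention $0$ when the second argument is empty. A state $\psi^A_W$ with $A:W\to\{S,I\}$ induces: $\psi^A_W$; $h^S_k(\psi^A_W)$ for $k\in W$ with $A_k=I$ and $T_{kn}>0$ for some $n\in W$ with $A_n=I$; and for each $k\in W$, $n\in V\setminus W$ with $T_{kn}>0$: the state $h^S_k(\psi^A_W)I_n$ if $f_{C(x)}(\{n\},W\setminus\{k\},\{k\})=0$, or the states $h^S_k(\psi^A_W)$, $S_kI_n$, $S_k$ if it equals $1$. $M_{C(x)}$ is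 the smallest set containing all $S_i,I_i$ and closed under induced states. The closed model of order $x$ is the ODE system, one equation per state in $M_{C(x)}$, obtained from the exact Markovian SIR moment equation for $\langle\psi^A_W\rangle$ by replacing $\langle h^S_k(\psi^A_W)I_n\rangle$ with $\langle h^S_k(\psi^A_W)\rangle\langle S_kI_n\rangle/\langle S_k\rangle$ whenever $f_{C(x)}(\{n\},W\setminus\{k\},\{k\})=1$. $D[W]$ is the induced subgraph. A graph is biconnected if it has at least three vertices, is connected and remains connected after deleting any vertex. $D[W]$ is a directed sub-block if some node of $W$ is reachable within $D[W]$ from all others and its underlying undirected graph is biconnected. *)

From HB Require Import structures.
From mathcomp Require Import all_boot all_order all_algebra.
Set Implicit Arguments. Unset Strict Implicit. Unset Printing Implicit Defensive.
Import Order.TTheory GRing.Theory Num.Theory.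

Inductive SIR := S_st | I_st | R_st.
Definition SIR_eqb (a b : SIR) :=
  match a, b with S_st, S_st | I_st, I_st | R_st, R_st => true | _, _ => false end.
Lemma SIR_eqP : Equality.axiom SIR_eqb.
Proof. by case; case; constructor. Qed.
HB.instance Definition _ := hasDecEq.Build SIR SIR_eqP.

Section Model.
Variables (R : realFieldType) (N : nat).
Local Notation V := 'I_N.
(* T i j = rate at which j infects i; arc (j,i) in A iff T i j > 0. *)
Variable T : V -> V -> R.
(* recovery rates *)
Variable gam : V -> R.

Local Open Scope ring_scope.

Definition arc (u v : V) : bool := 0 < T v u.

(* A subsystem state psi^A_W: W = support, A = values on W. *)
Definition state := {ffun V -> option SIR}.
Definition supp (psi : state) : {set V} := [set i | psi i != None].

Definition hset (X : SIR) (k : V) (psi : state) : state :=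
  [ffun j => if j == k then Some X else psi j].
Definition single (X : SIR) (i : V) : state :=
  [ffun j => if j == i then Some X else None].
Definition addI (psi : state) (n : V) : state := hset I_st n psi.

Fixpoint INs (Z : {set V}) (a : nat) (X : {set V}) : {set V} :=
  match a with
  | 0%N => X :\: Z
  | a'.+1 => INs Z a' X :|:
             [set u | (u \notin Z) && [exists v in INs Z a' X, arc u v]]
  end.

Definition fC (x : nat) (X Y Z : {set V}) : bool :=
  (Y != set0) &&
  [forall a : 'I_x.+1, INs Z a X :&: INs Z (x - a) Y == set0].

Definition SI_state (psi : state) : bool :=
  [forall i, psi i \in [:: None; Some S_st; Some I_st]].

Definition induced (x : nat) (psi phi : state) : Prop :=
  SI_state psi /\
  [\/ phi = psi,
      exists k n, [/\ psi k = Some I_st, psi n = Some I_st, 0 < T k n &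
                      phi = hset S_st k psi]
    | exists k n, [/\ k \in supp psi, n \notin supp psi, 0 < T k n &
        if fC x [set n] (supp psi :\ k) [set k]
        then phi = hset S_st k psi \/ phi = addI (single S_st k) n
             \/ phi = single S_st k
        else phi = addI (hset S_st k psi) n]].

Inductive MC (x : nat) : state -> Prop :=
  | MC_S i : MC x (single S_st i)
  | MC_I i : MC x (single I_st i)
  | MC_step psi phi : MC x psi -> induced x psi phi -> MC x phi.

(* term standing for <h^S_k(psi) I_n> in the closed model of order x *)
Definition closed_term (x : nat) (psi : state) (k n : V) (y : state -> R) : R :=
  if fC x [set n] (supp psi :\ k) [set k]
  then y (hset S_st k psi) * y (addI (single S_st k) n) / y (single S_st k)
  else y (addI (hset S_st k psi) n).

(* Right-hand side of the equation for <psi> in the closed model of order x,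
   obtained from the exact Markovian SIR moment equation
   d<psi>/dt = sum_{k: A_k = I} [ sum_{n in W, A_n = I} T_kn <h^S_k psi>
                                 + sum_{n notin W} T_kn <h^S_k(psi) I_n> - gam_k <psi> ]
             - sum_{k: A_k = S} [ sum_{n in W, A_n = I} T_kn <psi>
                                 + sum_{n notin W} T_kn <psi I_n> ]
             + sum_{k: A_k = R} gam_k <h^I_k psi>
   by the closure substitution. *)
Definition closed_rhs (x : nat) (psi : state) (y : state -> R) : R :=
  \sum_(k | psi k == Some I_st)
     (\sum_(n | psi n == Some I_st) T k n * y (hset S_st k psi)
      + \sum_(n | psi n == None) T k n * closed_term x psi k n y
      - gam k * y psi)
  - \sum_(k | psi k == Some S_st)
     (\sum_(n | psi n == Some I_st) T k n * y psi
      + \sum_(n | psi n == None) T k n * closed_term x psi k n y)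
  + \sum_(k | psi k == Some R_st) gam k * y (hset I_st k psi).

Definition subarc (W : {set V}) : rel V := fun u v => [&& arc u v, u \in W & v \in W].
Definition undir (W : {set V}) : rel V :=
  fun u v => [&& arc u v || arc v u, u \in W & v \in W].
Definition uconnected (W : {set V}) : Prop :=
  forall u v, u \in W -> v \in W -> connect (undir W) u v.
Definition biconnected_und (W : {set V}) : Prop :=
  (3 <= #|W|)%N /\ uconnected W /\ forall w, w \in W -> uconnected (W :\ w).
Definition sub_block (W : {set V}) : Prop :=
  (exists2 r, r \in W & forall u, u \in W -> connect (subarc W) u r)
  /\ biconnected_und W.

End Model.

From Pilot Require Import Defs.
From HB Require Import structures.
From mathcomp Require Import all_boot all_order all_algebra.
From mathcomp Require Import zify.
From Stdlib Require Import FunctionalExtensionality.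
Import Order.TTheory GRing.Theory Num.Theory.

Set Implicit Arguments. Unset Strict Implicit. Unset Printing Implicit Defensive.

(* Call a state a pair state if its support is a single node or two adjacent
   nodes.  For a pair state on W, the closure decision
   f_{C(x)}({j}, W \ {k}, {k}) is 0 when W = {k} (empty second argument), and
   it is 1 when W = {k, m} as long as x + 2 is below the size of the smallest
   directed sub-block: a node u reaching both j and m within x arcs of D - k
   gives two paths out of u which, once their common nodes are cut out, close
   up with the arcs j -> k and k -- m into a cycle on at most x + 2 nodes, and
   this cycle is a directed sub-block because all of its nodes reach k or m.
   So the closure decisions do not depend on x; by induction every state of
   M_{C(x)} is a pair state, and neither the induced states nor the closed
   equations depend on x. *)

Section TwoPaths.
Variables (A : eqType) (e : rel A).

Lemma shorten_two_paths u l1 l2 : path e u l1 -> path e u l2 ->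
  exists u' l1' l2', [/\ path e u' l1', last u' l1' = last u l1,
    path e u' l2', last u' l2' = last u l2 &
    (size l1' + size l2' <= size l1 + size l2)%N /\ uniq (u' :: l1' ++ l2')].
Proof.
have [c] := ubnP (size l1 + size l2); elim: c => // c IH in u l1 l2 *.
rewrite ltnS => sc p1 p2.
case: (shortenP p1) => l1' p1' u1 s1; case: (shortenP p2) => l2' p2' u2 s2.
have le_l1 : (size l1' <= size l1)%N by apply: uniq_leq_size => //; case/andP: u1.
have le_l2 : (size l2' <= size l2)%N by apply: uniq_leq_size => //; case/andP: u2.
have [/hasP[v v2 v1]|disj] := boolP (has (mem l1') l2'); last first.
  exists u, l1', l2'; split=> //; split; first exact: leq_add.
  rewrite /= cat_uniq mem_cat negb_or disj.
  by move: u1 u2 => /= /andP[-> ->] /andP[-> ->].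
case/splitPr: v1 p1' le_l1 => a1 b1 p1' le_l1; case/splitPr: v2 p2' le_l2 => a2 b2 p2' le_l2.
move: p1' p2'; rewrite !cat_path /= => /and3P[_ _ q1] /and3P[_ _ q2].
rewrite !last_cat /=.
have lt_c : (size b1 + size b2 < c)%N.
  by move: le_l1 le_l2; rewrite !size_cat /=; lia.
have [u' [l1'' [l2'' [q1' e1 q2' e2 [le_b uq]]]]] := IH v b1 b2 lt_c q1 q2.
exists u', l1'', l2''; split=> //; split=> //.
by move: le_l1 le_l2; rewrite !size_cat /=; lia.
Qed.

Hypothesis e_sym : symmetric e.

Lemma cycle_two_paths k u l1 l2 : path e u l1 -> path e u l2 ->
  e (last u l1) k -> e k (last u l2) -> cycle e (k :: rev (u :: l1) ++ l2).
Proof.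
move=> p1 p2 e1 e2.
have rev_l1 : rev (u :: l1) = last u l1 :: rev (belast u l1).
  by rewrite lastI rev_rcons.
have last_rev : last (last u l1) (rev (belast u l1)) = u.
  by have := congr1 (last k) rev_l1; rewrite rev_cons last_rcons /= => <-.
rewrite rev_l1 /= rcons_cat cat_path rcons_path last_rev p2 e_sym e1 e_sym e2 /=.
by rewrite andbT rev_path -(eq_path e_sym).
Qed.

End TwoPaths.

Lemma path_connect_last (A : finType) (e : rel A) x p :
  path e x p -> {in x :: p, forall v, connect e v (last x p)}.
Proof.
elim: p x => [|y p IH] x /=; first by move=> _ v; rewrite inE => /eqP ->.
case/andP=> exy py v; rewrite inE => /predU1P[->|pv]; last exact: IH.
exact: connect_trans (connect1 exy) (IH _ py _ (mem_head _ _)).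
Qed.

Section Digraph.
Variables (R : realFieldType) (N : nat) (T : 'I_N -> 'I_N -> R).
Local Notation V := 'I_N.
Local Notation arc := (Defs.arc T).

Definition adjacent (a b : V) := arc a b || arc b a.

Lemma adjacent_sym : symmetric adjacent.
Proof. by move=> a b; rewrite /adjacent orbC. Qed.

Lemma undir_sym W : symmetric (undir T W).
Proof. by move=> a b; rewrite /undir orbC [(b \in W) && _]andbC. Qed.

Lemma path_uconnected (W : {set V}) y p :
  path adjacent y p -> W =i y :: p -> uconnected T W.
Proof.
move=> yp eqW.
have yp_W : path (undir T W) y p.
  apply: (sub_in_path (P := mem W)) yp; last by apply/allP => v; rewrite -eqW.
  by move=> a b aW bW ab; rewrite /undir -/(adjacent a b) ab aW bW.
have from_y v : v \in W -> connect (undir T W) y v.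
  by move=> vW; apply: (path_connect yp_W); rewrite -eqW.
move=> u v uW vW; apply: connect_trans (from_y v vW).
by rewrite (sym_connect_sym (@undir_sym W)) from_y.
Qed.

Lemma uniq_cycle_biconnected c : uniq c -> cycle adjacent c -> (3 <= size c)%N ->
  biconnected_und T [set v in c].
Proof.
move=> uc cc sc; split; first by rewrite cardsE (card_uniqP uc).
split.
  case: c uc cc sc => [//|y p] _ /= cc _.
  apply: (@path_uconnected _ y p); last by move=> v; rewrite inE.
  by move: cc; rewrite rcons_path => /andP[].
move=> w; rewrite inE => w_c; case/splitPr: w_c uc cc => p1 p2 uc cc.
have rot_c : rot (size p1) (p1 ++ w :: p2) = w :: p2 ++ p1 := rot_size_cat _ _.
have {}cc : cycle adjacent (w :: p2 ++ p1) by rewrite -rot_c rot_cycle.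
have {}uc : uniq (w :: p2 ++ p1) by rewrite -rot_c rot_uniq.
have mem_c v : (v \in p1 ++ w :: p2) = (v \in w :: p2 ++ p1) by rewrite -rot_c mem_rot.
case E: (p2 ++ p1) uc cc => [|y q] uc cc.
  by move=> u v; rewrite !inE mem_c E !inE; case: eqP.
apply: (@path_uconnected _ y q).
  by move: cc; rewrite /= rcons_path => /andP[_ /andP[]].
move=> v; rewrite !inE mem_c E !inE.
case: (v =P w) => [->|_] //=.
by move: uc; rewrite /= inE negb_or => /andP[/andP[/negPf -> /negPf ->]].
Qed.

Lemma two_paths_sub_block k u l1 l2 :
  path arc u l1 -> path arc u l2 -> uniq (k :: u :: l1 ++ l2) ->
  arc (last u l1) k -> adjacent k (last u l2) -> last u l1 != last u l2 ->
  sub_block T [set v in k :: u :: l1 ++ l2].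
Proof.
move=> p1 p2 uq n0k km n0m; set W := [set v in _].
split; last first.
  set c := k :: rev (u :: l1) ++ l2.
  have perm_c : perm_eq c (k :: u :: l1 ++ l2).
    by rewrite /c perm_cons -cat_cons perm_cat2r perm_rev.
  have -> : W = [set v in c] by apply/setP => v; rewrite !in_set (perm_mem perm_c).
  have arc_adj : subrel arc adjacent by move=> a b ab; rewrite /adjacent ab.
  apply: uniq_cycle_biconnected; first by rewrite (perm_uniq perm_c).
    apply: cycle_two_paths; first exact: adjacent_sym.
    - exact: (sub_path arc_adj p1).
    - exact: (sub_path arc_adj p2).
    - exact: arc_adj.
    - exact: km.
  rewrite (perm_size perm_c) /= size_cat !ltnS.
  by move: n0m {p1 p2 uq n0k km W c perm_c}; case: l1 l2 => [|??] [|??] //=; rewrite eqxx.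
have memW v : v \in W = (v \in k :: u :: l1) || (v \in l2).
  by rewrite inE -!cat_cons mem_cat.
have lift_path l : {subset u :: l <= W} -> path arc u l -> path (subarc T W) u l.
  move=> lW; apply: (sub_in_path (P := mem W)); last by apply/allP.
  by move=> a b aW bW ab; rewrite /subarc ab aW bW.
have l1W : {subset u :: l1 <= W} by move=> v v1; rewrite memW in_cons v1 orbT.
have l2W : {subset u :: l2 <= W}.
  by move=> v; rewrite memW !in_cons => /orP[->|->]; rewrite ?orbT.
have kW : k \in W by rewrite memW mem_head.
have mW := l2W _ (mem_last u l2).
have to_k : {in k :: u :: l1, forall v, connect (subarc T W) v k}.
  move=> v; rewrite in_cons => /predU1P[-> //|v1].
  apply: connect_trans (path_connect_last (lift_path _ l1W p1) v1) (connect1 _).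
  by rewrite /subarc n0k (l1W _ (mem_last u l1)) kW.
have to_m := path_connect_last (lift_path _ l2W p2).
case/orP: km => [km|mk].
- exists (last u l2) => // v; rewrite memW => /orP[vk|v2]; last first.
    by apply: to_m; rewrite in_cons v2 orbT.
  by apply: connect_trans (to_k v vk) (connect1 _); rewrite /subarc km kW mW.
- exists k => // v; rewrite memW => /orP[vk|v2]; first exact: to_k.
  apply: connect_trans (to_m v _) (connect1 _); first by rewrite in_cons v2 orbT.
  by rewrite /subarc mk kW mW.
Qed.

Definition arc_outside (Z : {set V}) : rel V :=
  fun a b => [&& arc a b, a \notin Z & b \notin Z].

Lemma INsP Z a X u : u \in INs T Z a X ->
  exists l, [/\ path (arc_outside Z) u l, last u l \in X, (size l <= a)%N & u \notin Z].
Proof.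
elim: a u => [|a IH] u /=; first by rewrite !inE => /andP[uZ uX]; exists [::].
rewrite !inE => /orP[/IH[l [ul lX la uZ]]|/andP[uZ /existsP[v /andP[vIN uv]]]].
  by exists l; split => //; apply: leqW.
have [l [vl lX la vZ]] := IH _ vIN.
by exists (v :: l); split => //=; rewrite vl /arc_outside uv uZ vZ.
Qed.

Lemma path_outside Z u l : path (arc_outside Z) u l -> last u l \notin Z ->
  {in Z, forall v, v \notin u :: l}.
Proof.
elim: l u => [|y l IH] u /=; first by move=> _ uZ v vZ; rewrite inE; apply: contraNneq uZ => <-.
case/andP=> /and3P[_ uZ yZ] yl lZ v vZ; rewrite in_cons negb_or (IH _ yl lZ _ vZ) andbT.
by apply: contraNneq uZ => <-.
Qed.

Variable n : nat.
Hypothesis large_blocks : forall W : {set V}, sub_block T W -> (n <= #|W|)%N.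

Lemma fC_adjacent x k m n0 : (x.+2 < n)%N -> adjacent k m -> k != m ->
  n0 != k -> n0 != m -> arc n0 k -> fC T x [set n0] [set m] [set k].
Proof.
move=> lt_xn km ne_km n0k n0m n0_k.
rewrite /fC; have -> : ([set m] != set0) = true by apply/set0Pn; exists m; apply: set11.
apply/idPn; rewrite negb_forall => /existsP[a /set0Pn[u]].
rewrite inE => /andP[/INsP[l1 [p1 e1 s1 _]] /INsP[l2 [p2 e2 s2 _]]].
move: e1 e2; rewrite !inE => /eqP e1 /eqP e2.
have le_x : (size l1 + size l2 <= x)%N by move: (ltn_ord a); lia.
have [u' [l1' [l2' [q1 f1 q2 f2 [sz uq]]]]] := shorten_two_paths p1 p2.
rewrite {}e1 in f1; rewrite {}e2 in f2.
have k_notin l : path (arc_outside [set k]) u' l -> last u' l != k -> k \notin u' :: l.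
  by move=> ul lk; apply: path_outside ul _ _ (set11 k); rewrite inE.
have uqk : uniq (k :: u' :: l1' ++ l2').
  rewrite cons_uniq uq andbT -cat_cons mem_cat negb_or k_notin ?f1 //=.
  by move: (k_notin _ q2); rewrite f2 eq_sym ne_km in_cons negb_or => /(_ isT)/andP[].
have arc_out : subrel (arc_outside [set k]) arc by move=> ? ? /and3P[].
have := two_paths_sub_block (sub_path arc_out q1) (sub_path arc_out q2) uqk.
rewrite f1 f2 => /(_ n0_k km n0m) /large_blocks.
rewrite cardsE (card_uniqP uqk) /= size_cat => /(leq_trans lt_xn).
by rewrite !ltnS ltnNge (leq_trans sz le_x).
Qed.

End Digraph.

Section PairStates.
Variables (R : realFieldType) (N : nat) (T : 'I_N -> 'I_N -> R).
Local Notation V := 'I_N.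
Local Notation arc := (Defs.arc T).

Lemma supp_single X (i : V) : supp (single X i) = [set i].
Proof. by apply/setP => j; rewrite !inE ffunE; case: (j =P i). Qed.

Lemma supp_hset X (k : V) psi : supp (hset X k psi) = k |: supp psi.
Proof. by apply/setP => j; rewrite !inE ffunE; case: (j =P k). Qed.

Lemma supp_hset_in X (k : V) psi : k \in supp psi -> supp (hset X k psi) = supp psi.
Proof. by rewrite supp_hset => k_psi; apply/setUidPr; rewrite sub1set. Qed.

Lemma SI_single X (i : V) : X != R_st -> SI_state (single X i).
Proof.
move=> XR; apply/forallP => j; rewrite ffunE; case: (j =P i) => _; rewrite !inE //.
by case: X XR.
Qed.

Lemma SI_hset X (k : V) psi : X != R_st -> SI_state psi -> SI_state (hset X k psi).
Proof.
move=> XR /forallP SIpsi; apply/forallP => j; rewrite ffunE.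
by case: (j =P k) => _; [rewrite !inE; case: X XR | exact: SIpsi].
Qed.

Definition pair_state (psi : state N) : Prop :=
  SI_state psi /\ exists a b, supp psi = [set a; b] /\ (a == b) || adjacent T a b.

Lemma pair_state_single psi (a : V) : SI_state psi -> supp psi = [set a] -> pair_state psi.
Proof. by move=> SIpsi suppE; split => //; exists a, a; rewrite setUid eqxx. Qed.

Lemma pair_state_arc psi (a b : V) : SI_state psi -> supp psi = [set a; b] -> arc a b ->
  pair_state psi.
Proof. by move=> SIpsi suppE ab; split => //; exists a, b; rewrite /adjacent ab orbT. Qed.

Lemma pair_state_hset X psi k : X != R_st -> pair_state psi -> k \in supp psi ->
  pair_state (hset X k psi).
Proof. by move=> XR [SIpsi pair] kW; split; [exact: SI_hset | rewrite supp_hset_in]. Qed.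

Lemma card_supp_pair psi : pair_state psi -> (#|supp psi| <= 2)%N.
Proof. by case=> _ [a [b [-> _]]]; rewrite cards2; case: (a != b). Qed.

Lemma supp_pair_single psi k : pair_state psi -> #|supp psi| != 2 -> k \in supp psi ->
  supp psi = [set k].
Proof.
case=> _ [a [b [-> _]]]; rewrite cards2 eqSS eqb1 negbK => /eqP <-.
by rewrite setUid inE => /eqP ->.
Qed.

Variable n : nat.
Hypothesis large_blocks : forall W : {set V}, sub_block T W -> (n <= #|W|)%N.

Lemma fC_pair_state x psi k j : (x.+2 < n)%N -> pair_state psi ->
  k \in supp psi -> j \notin supp psi -> (0 < T k j)%R ->
  fC T x [set j] (supp psi :\ k) [set k] = (#|supp psi| == 2).
Proof.
move=> lt_xn [_ [a [b [-> ab]]]] k_ab.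
wlog -> : a b ab k_ab / k = a.
  move=> wlog; case/set2P: (k_ab) => [|kb]; first exact: wlog.
  by rewrite setUC; apply: wlog kb; rewrite 1?eq_sym 1?adjacent_sym // setUC.
rewrite !inE negb_or cards2 => /andP[ja jb] Taj.
have [<-|ne_ab] /= := eqVneq a b; first by rewrite setUid setDv /fC eqxx.
rewrite (negPf ne_ab) /= in ab.
rewrite setU1K ?inE // eqxx.
exact: (fC_adjacent large_blocks).
Qed.

Lemma pair_state_induced x psi phi : (x.+2 < n)%N -> pair_state psi ->
  induced T x psi phi -> pair_state phi.
Proof.
move=> lt_xn psi_pair [SIpsi [->|[k [j [psik _ _ ->]]]|[k [j [kW jW Tkj]]]]] //.
  by apply: pair_state_hset; rewrite // inE psik.
have jk : arc j k by [].
rewrite (fC_pair_state lt_xn psi_pair kW jW Tkj).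
case: ifP => [_ [->|[->|->]] | /negbT card_ne2 ->].
- exact: pair_state_hset.
- apply: (pair_state_arc (a := j) (b := k)) jk; first exact/SI_hset/SI_single.
  by rewrite /addI supp_hset supp_single.
- by apply: (pair_state_single (a := k)); [exact: SI_single | rewrite supp_single].
apply: (pair_state_arc (a := j) (b := k)) jk; first exact/SI_hset/SI_hset.
by rewrite /addI !supp_hset (supp_pair_single psi_pair card_ne2 kW) setUid.
Qed.

Lemma MC_pair_state x psi : (x.+2 < n)%N -> MC T x psi -> pair_state psi.
Proof.
move=> lt_xn; elim=> [i|i|{}psi phi _ psi_pair]; last exact: pair_state_induced.
- by apply: (pair_state_single (a := i)); [exact: SI_single | rewrite supp_single].
- by apply: (pair_state_single (a := i)); [exact: SI_single | rewrite supp_single].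
Qed.

Lemma induced_order_change x y psi phi : (x.+2 < n)%N -> (y.+2 < n)%N ->
  pair_state psi -> induced T x psi phi -> induced T y psi phi.
Proof.
move=> lt_xn lt_yn psi_pair [SIpsi [eq_phi|step|[k [j [kW jW Tkj]]]]]; split => //.
- by constructor 1.
- by constructor 2.
constructor 3; exists k, j; split => //.
by rewrite (fC_pair_state lt_yn psi_pair kW jW Tkj) -(fC_pair_state lt_xn psi_pair kW jW Tkj).
Qed.

Lemma MC_order_change x y psi : (x.+2 < n)%N -> (y.+2 < n)%N -> MC T x psi -> MC T y psi.
Proof.
move=> lt_xn lt_yn; elim=> [i|i|{}psi phi MCpsi MCpsi_y ind]; [exact: MC_S | exact: MC_I|].
apply: MC_step MCpsi_y _; apply: induced_order_change ind => //.
exact: MC_pair_state MCpsi.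
Qed.

Lemma closed_rhs_order_change gam x y psi : (forall i j, 0 <= T i j)%R ->
  (x.+2 < n)%N -> (y.+2 < n)%N -> pair_state psi ->
  closed_rhs T gam x psi = closed_rhs T gam y psi.
Proof.
move=> T_ge0 lt_xn lt_yn psi_pair; apply: functional_extensionality => f.
have closed_sum k : k \in supp psi ->
    (\sum_(j | psi j == None) T k j * closed_term T x psi k j f =
     \sum_(j | psi j == None) T k j * closed_term T y psi k j f)%R.
  move=> kW; apply: eq_bigr => j j_out.
  have [<-|Tkj] := eqVneq 0%R (T k j); first by rewrite !mul0r.
  have jW : j \notin supp psi by rewrite inE negbK.
  have {}Tkj : (0 < T k j)%R by rewrite lt_def eq_sym Tkj T_ge0.
  rewrite /closed_term (fC_pair_state lt_xn psi_pair kW jW Tkj).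
  by rewrite (fC_pair_state lt_yn psi_pair kW jW Tkj).
rewrite /closed_rhs; congr (_ - _ + _)%R; apply: eq_bigr => k /eqP psik.
  by rewrite closed_sum // inE psik.
by rewrite closed_sum // inE psik.
Qed.

End PairStates.

Local Open Scope ring_scope.

Theorem mainTheorem13 (R : realFieldType) (N : nat) (T : 'I_N -> 'I_N -> R)
    (gam : 'I_N -> R)
    (HT0 : forall i j, 0 <= T i j) (HTii : forall i, T i i = 0)
    (Hgam : forall i, 0 <= gam i)
    (n : nat)
    (Hmin : (exists W : {set 'I_N}, sub_block T W /\ #|W| = n) /\
            (forall W : {set 'I_N}, sub_block T W -> (n <= #|W|)%N)) :
  forall x : nat, (x < n - 2)%N ->
    [/\ forall psi, MC T x psi -> (#|supp psi| <= 2)%N,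
        forall psi, MC T x psi <-> MC T 0 psi
      & forall psi, MC T x psi -> closed_rhs T gam x psi = closed_rhs T gam 0 psi].
Proof.
case: Hmin => [[W0 [[_ [W0_ge3 _]] W0_n]] large_blocks] x lt_x_n2.
have lt_xn : (x.+2 < n)%N by move: lt_x_n2; lia.
have lt_0n : (0.+2 < n)%N by rewrite -W0_n.
split.
- by move=> psi /(MC_pair_state large_blocks lt_xn) /card_supp_pair.
- by move=> psi; split; apply: (MC_order_change large_blocks).
- move=> psi /(MC_pair_state large_blocks lt_xn) psi_pair.
  exact: (closed_rhs_order_change large_blocks).
Qed.
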